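(* Let $T$ be a finite tree and let $P=p_0p_1\dots p_k$ ($k\ge1$) be a path in $T$ such that each of $p_1,\dots,p_{k-1}$ has degree $2$ in $T$. Let $B$ be the vertex set of the component containing $p_k$ of the graph obtained from $T$ by deleting the edges of $P$, and let $T[B\cup P]$ denote the subgraph of $T$ induced by $B\cup\{p_0,\dots,p_k\}$. If $k$ is even, then for every $\ell\ge1$, \[\omega_{\ell}(p_0,T[B\cup P])-\omega_{\ell}(p_0,P)\leq \omega_{\ell}(p_k,T[B\cup P])-\omega_{\ell}(p_k,P).\]
   Context: For a graph $G$, a vertex $x$ of $G$ and $\ell\ge1$, $\omega_\ell(x,G)$ denotes the number of walks of length $\ell$ in $G$ starting at $x$ (a walk of length $\ell$ being a sequence of vertices $x=v_0,v_1,\dots,v_\ell$ with $v_{i-1}v_i\in E(G)$). Here $P$ is regarded as a graph (the path). *)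

(* finite simple graphs as symmetric irreflexive relations on a finType. *)
From mathcomp Require Import all_boot all_order all_algebra.
Set Implicit Arguments. Unset Strict Implicit. Unset Printing Implicit Defensive.

Definition is_tree (V : finType) (e : rel V) : Prop :=
  symmetric e /\ irreflexive e /\ (forall x y : V, connect e x y) /\
  (forall c : seq V, uniq c -> 3 <= size c -> ~~ cycle e c).

(* Number of walks of length l starting at x in the graph with vertex set S and
   adjacency adj (edges used are adj-edges between vertices of S):
   sequences x = v_0, v_1, ..., v_l of vertices of S with adj v_(i-1) v_i. *)
Definition nwalks (V : finType) (S : {set V}) (adj : rel V) (l : nat) (x : V) : nat :=
  #|[set t : l.-tuple V | [&& x \in S, all (fun v => v \in S) t & path adj x t]]|.

Definition path_vset (V : finType) (p : nat -> V) (k : nat) : {set V} :=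
  [set x | [exists i : 'I_k.+1, x == p i]].

Definition path_adj (V : finType) (p : nat -> V) (k : nat) : rel V :=
  fun x y => [exists i : 'I_k, ((x == p i) && (y == p i.+1)) || ((y == p i) && (x == p i.+1))].

Definition del_path_edges (V : finType) (e : rel V) (p : nat -> V) (k : nat) : rel V :=
  fun x y => e x y && ~~ path_adj p k x y.

Definition compB (V : finType) (e : rel V) (p : nat -> V) (k : nat) : {set V} :=
  [set y | connect (del_path_edges e p k) (p k) y].

From mathcomp Require Import all_boot all_order all_algebra zify.
Import Order.TTheory GRing.Theory Num.Theory.

(* Write k = 2m.  A walk from p_0 in T[B u P] cannot leave the path graph P before
   its first visit to the midpoint p_m: the inner vertices have degree 2, and p_1 is
   the only neighbour of p_0 in B u P, since another one would close a cycle of T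
   through B.  Reflecting the part of the walk before that visit by p_i <-> p_(k-i)
   is an involution that sends the walks from p_0 which are not walks of P to walks
   from p_k which are not walks of P. *)

Set Implicit Arguments.
Unset Strict Implicit.
Unset Printing Implicit Defensive.

Section Walks.

Variable V : finType.

Definition walkb (S : {set V}) (r : rel V) (x : V) (t : seq V) : bool :=
  [&& x \in S, all (fun v => v \in S) t & path r x t].

Lemma nwalksE S r l x : nwalks S r l x = #|[set t : l.-tuple V | walkb S r x t]|.
Proof. by []. Qed.

Lemma walkb_split S r x pre y rest :
  walkb S r x (pre ++ y :: rest) = walkb S r x (rcons pre y) && walkb S r y rest.
Proof.
rewrite /walkb -cat_rcons cat_path last_rcons all_cat all_rcons /=.
by case: (x \in S); case: (y \in S); rewrite /= ?andbF // andbACA.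
Qed.

Lemma walkb_sub (S S' : {set V}) (r r' : rel V) x t :
  S \subset S' -> subrel r r' -> walkb S r x t -> walkb S' r' x t.
Proof.
move=> /subsetP SS' rr' /and3P[xS tS rt]; rewrite /walkb SS' //= (sub_path rr') // andbT.
exact: sub_all tS.
Qed.

End Walks.

Section MapBefore.

Variables (T : eqType) (f : T -> T) (x : T).

Definition map_before (t : seq T) : seq T :=
  map f (take (index x t) t) ++ drop (index x t) t.

Lemma map_before_cat pre rest : x \notin pre ->
  map_before (pre ++ x :: rest) = map f pre ++ x :: rest.
Proof.
move=> xNpre; rewrite /map_before index_cat (negbTE xNpre) /= eqxx addn0.
by rewrite take_size_cat // drop_size_cat.
Qed.

Lemma map_before_notin t : x \notin t -> map_before t = map f t.
Proof.
by move=> xNt; rewrite /map_before memNindex // take_size drop_size cats0.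
Qed.

Lemma size_map_before t : size (map_before t) = size t.
Proof.
by rewrite size_cat size_map size_takel ?index_size // size_drop subnKC ?index_size.
Qed.

Lemma split_first t : x \in t ->
  exists2 pre : seq T, x \notin pre & exists rest, t = pre ++ x :: rest.
Proof.
move=> xt; exists (take (index x t) t).
  by rewrite in_take_leq ?index_size // ltnn.
exists (drop (index x t).+1 t).
by rewrite -{1}(cat_take_drop (index x t) t) (drop_nth x) ?index_mem // nth_index.
Qed.

Hypotheses (fK : involutive f) (f_eq_x : forall v, (f v == x) = (v == x)).

Lemma mem_map_fix s : (x \in map f s) = (x \in s).
Proof.
apply/mapP/idP => [[v vs /eqP]|xs]; first by rewrite eq_sym f_eq_x => /eqP <-.
by exists x => //; apply/eqP; rewrite eq_sym f_eq_x.
Qed.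

Lemma map_beforeK : involutive map_before.
Proof.
move=> t; have [/split_first[pre xNpre [rest ->]]|xNt] := boolP (x \in t).
  by rewrite !map_before_cat ?mem_map_fix // (mapK fK).
by rewrite !map_before_notin ?mem_map_fix // (mapK fK).
Qed.

End MapBefore.

Section PathGraph.

Variables (V : finType) (p : nat -> V) (k : nat).

Lemma path_adjP x y :
  reflect (exists2 i, i < k & (x = p i /\ y = p i.+1) \/ (y = p i /\ x = p i.+1))
    (path_adj p k x y).
Proof.
apply: (iffP existsP) => [[i /orP[|] /andP[/eqP-> /eqP->]]|[i ik [[-> ->]|[-> ->]]]].
- by exists i => //; left.
- by exists i => //; right.
- by exists (Ordinal ik); rewrite !eqxx.
- by exists (Ordinal ik); rewrite !eqxx orbT.
Qed.

Lemma path_adj_sym : symmetric (path_adj p k).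
Proof. by move=> x y; apply/path_adjP/path_adjP => -[i ik H]; exists i => //; tauto. Qed.

Lemma path_adj_succ i : i < k -> path_adj p k (p i) (p i.+1).
Proof. by move=> ik; apply/path_adjP; exists i => //; left. Qed.

Lemma path_adj_pred i : i < k -> path_adj p k (p i.+1) (p i).
Proof. by move=> ik; rewrite path_adj_sym path_adj_succ. Qed.

Lemma path_vsetP x : reflect (exists2 j, j <= k & x = p j) (x \in path_vset p k).
Proof.
rewrite inE; apply: (iffP existsP) => [[i /eqP->]|[j jk ->]].
  by exists i => //; rewrite -ltnS.
by exists (Ordinal (jk : j < k.+1)).
Qed.

Lemma mem_path_vset j : j <= k -> p j \in path_vset p k.
Proof. by move=> jk; apply/path_vsetP; exists j. Qed.

Lemma path_adj_vset x y : path_adj p k x y -> x \in path_vset p k.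
Proof. by case/path_adjP=> i ik [[-> _]|[_ ->]]; rewrite mem_path_vset // ltnW. Qed.

Lemma last_map_iota j : last (p 0) (map p (iota 1 j)) = p j.
Proof. by case: j => // j; rewrite -[j.+1]addn1 iotaD map_cat last_cat /= addnC. Qed.

Definition path_mirror (v : V) : V :=
  if [pick i : 'I_k.+1 | v == p i] is Some i then p (k - i) else v.

Hypothesis p_inj : forall i j, i <= k -> j <= k -> p i = p j -> i = j.

Lemma path_mirror_p j : j <= k -> path_mirror (p j) = p (k - j).
Proof.
move=> jk; rewrite /path_mirror; case: pickP => [i /eqP E | /(_ (Ordinal (jk : j < k.+1)))].
  by rewrite (p_inj jk _ E) // -ltnS.
by rewrite eqxx.
Qed.

Lemma path_mirror_notin v : v \notin path_vset p k -> path_mirror v = v.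
Proof.
rewrite /path_mirror; case: pickP => [i /eqP-> | //].
by rewrite mem_path_vset // -ltnS.
Qed.

Lemma path_mirrorK : involutive path_mirror.
Proof.
move=> v; have [/path_vsetP[j jk ->]|vP] := boolP (v \in path_vset p k).
  by rewrite !path_mirror_p ?leq_subr ?subKn.
by rewrite !path_mirror_notin.
Qed.

Lemma path_mirror_vset v : v \in path_vset p k -> path_mirror v \in path_vset p k.
Proof. by case/path_vsetP=> j jk ->; rewrite path_mirror_p // mem_path_vset ?leq_subr. Qed.

Lemma path_mirror_adj : {homo path_mirror : x y / path_adj p k x y}.
Proof.
move=> _ _ /path_adjP[i ik [[-> ->]|[-> ->]]];
  rewrite !path_mirror_p ?(ltnW ik) // -(subnSK ik).
  by apply: path_adj_pred; lia.
by apply: path_adj_succ; lia.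
Qed.

Lemma path_mirror_eq_mid m v : k = m.*2 -> (path_mirror v == p m) = (v == p m).
Proof.
move=> km; have mk : m <= k by lia.
have [/path_vsetP[j jk ->]|vP] := boolP (v \in path_vset p k); last first.
  by rewrite path_mirror_notin.
rewrite path_mirror_p //; apply/eqP/eqP => /p_inj E.
  by rewrite -E ?leq_subr //; congr p; have := E (leq_subr _ _) mk; lia.
by rewrite E //; congr p; have := E jk mk; lia.
Qed.

Lemma walkb_path_mirror x s :
  walkb (path_vset p k) (path_adj p k) x s ->
  walkb (path_vset p k) (path_adj p k) (path_mirror x) (map path_mirror s).
Proof.
case/and3P=> xP sP xs; rewrite /walkb path_mirror_vset //= all_map.
by rewrite (homo_path path_mirror_adj) // andbT; apply: sub_all sP => v /path_mirror_vset.
Qed.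

End PathGraph.

Lemma path_vset_leq (V : finType) (p : nat -> V) j k :
  j <= k -> path_vset p j \subset path_vset p k.
Proof.
move=> jk; apply/subsetP => _ /path_vsetP[i ij ->].
by rewrite mem_path_vset // (leq_trans ij).
Qed.

Section TreePath.

Variables (V : finType) (e : rel V) (p : nat -> V) (k : nat).

Hypotheses (e_sym : symmetric e) (e_irr : irreflexive e)
  (e_acyclic : forall c : seq V, uniq c -> 3 <= size c -> ~~ cycle e c)
  (p_inj : forall i j, i <= k -> j <= k -> p i = p j -> i = j)
  (p_edge : forall i, i < k -> e (p i) (p i.+1))
  (p_deg2 : forall i, 0 < i -> i < k -> #|[set y | e (p i) y]| = 2).

Local Notation P := (path_vset p k).
Local Notation BP := (compB e p k :|: path_vset p k).

Lemma path_adj_edge : subrel (path_adj p k) e.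
Proof.
move=> _ _ /path_adjP[i ik [[-> ->]|[-> ->]]]; last rewrite e_sym; exact: p_edge.
Qed.

Lemma path_map_iota a j : a + j <= k -> path e (p a) (map p (iota a.+1 j)).
Proof.
elim: j a => [|j IH] a ajk //=; rewrite IH ?addSnnS // andbT.
by apply: p_edge; rewrite (leq_trans _ ajk) // -addn1 leq_add2l.
Qed.

Lemma uniq_map_iota a j : a + j <= k.+1 -> uniq (map p (iota a j)).
Proof.
move=> ajk; rewrite map_inj_in_uniq ?iota_uniq // => i i'.
rewrite !mem_iota => /andP[_ ia] /andP[_ i'a]; apply: p_inj.
  by rewrite -ltnS (leq_trans ia).
by rewrite -ltnS (leq_trans i'a).
Qed.

Lemma inner_neighbor i y : 0 < i -> i < k -> e (p i) y -> y = p i.-1 \/ y = p i.+1.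
Proof.
move=> i_gt0 ik ey.
have pred_ik : i.-1 < k by rewrite (leq_ltn_trans (leq_pred i)).
have nbrs : [set p i.-1; p i.+1] = [set y | e (p i) y].
  apply/eqP; rewrite eqEcard p_deg2 // cards2.
  have -> : p i.-1 != p i.+1.
    by apply/eqP => /p_inj E; have := E (ltnW pred_ik) ik; lia.
  rewrite andbT; apply/subsetP => z; rewrite !inE => /orP[]/eqP->; last exact: p_edge.
  by rewrite e_sym; have := p_edge pred_ik; rewrite prednK.
have : y \in [set y | e (p i) y] by rewrite inE.
by rewrite -nbrs !inE => /orP[]/eqP->; [left|right].
Qed.

Lemma inner_edge_on_path i y : 0 < i -> i < k -> e y (p i) -> path_adj p k y (p i).
Proof.
move=> i_gt0 ik; rewrite e_sym => /inner_neighbor[] // ->; last exact: path_adj_pred.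
by rewrite -{2}(prednK i_gt0) path_adj_succ // (leq_ltn_trans (leq_pred i)).
Qed.

Lemma del_path_avoids_inner i x w : 0 < i -> i < k ->
  path (del_path_edges e p k) x w -> p i \notin w.
Proof.
move=> i_gt0 ik dw; apply/negP => w_pi; case/splitPr: w_pi dw => w1 w2.
rewrite cat_path /= => /andP[_ /andP[/andP[e_last]]].
by rewrite inner_edge_on_path.
Qed.

Lemma p0_no_chord j : 1 < j -> j <= k -> ~~ e (p 0) (p j).
Proof.
move=> j_gt1 jk; apply/negP => ej0.
have uniq_c : uniq (map p (iota 0 j.+1)) by apply: uniq_map_iota; rewrite add0n ltnS.
have size_c : 3 <= size (map p (iota 0 j.+1)) by rewrite size_map size_iota ltnS.
apply: (negP (e_acyclic uniq_c size_c)).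
by rewrite /= rcons_path path_map_iota // last_map_iota e_sym.
Qed.

Lemma p0_notin_compB : 1 < k -> p 0 \notin compB e p k.
Proof.
move=> k_gt1; rewrite inE; apply/negP => /connectP[q dq q_p0].
case: (shortenP dq) q_p0 => {q dq} s ds /= /andP[pkNs us] _.
case/lastP: s ds pkNs us => [_ _ _ /= /p_inj|q y]; first by move/(_ (leq0n k) (leqnn k)); lia.
rewrite last_rcons => dq pkNq uq y_p0; subst y.
have sub x : x \in q -> x \in rcons q (p 0) by rewrite mem_rcons inE => ->; rewrite orbT.
have qN i : i <= k -> p i \notin q.
  move=> ik; have [-> | i_gt0] := posnP i; first by move: uq; rewrite rcons_uniq => /andP[].
  move: ik; rewrite leq_eqVlt => /orP[/eqP-> | ik]; first exact: contra (sub _) pkNq.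
  exact: contra (sub _) (del_path_avoids_inner i_gt0 ik dq).
apply: (negP (e_acyclic (c := map p (iota 0 k.+1) ++ q) _ _)).
- rewrite cat_uniq uniq_map_iota //; move: uq; rewrite rcons_uniq => /andP[_ ->].
  rewrite andbT has_sym; apply/hasPn => x /mapP[i]; rewrite mem_iota => /andP[_ ik ->].
  exact: qN.
- by rewrite size_cat size_map size_iota; lia.
- rewrite /= rcons_cat cat_path path_map_iota // last_map_iota.
  by apply: sub_path dq => x y /andP[].
Qed.

Lemma p0_neighbor v : 1 < k -> e (p 0) v -> v \in BP -> v = p 1.
Proof.
move=> k_gt1 ev vBP; have [/path_vsetP[[|[|j]] jk vj]|vNP] := boolP (v \in P).
- by rewrite vj e_irr in ev.
- by [].
- by rewrite vj (negbTE (p0_no_chord _ jk)) in ev.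
- have vB : v \in compB e p k by move: vBP; rewrite inE (negbTE vNP) orbF.
  have : p 0 \in compB e p k.
    move: vB; rewrite !inE => /connect_trans; apply; apply: connect1.
    by rewrite /del_path_edges e_sym ev; apply: contra vNP => /path_adj_vset.
  by rewrite (negbTE (p0_notin_compB k_gt1)).
Qed.

(* The midpoint is p n.+1, and [path_vset p n] is the half of P containing p 0. *)
Variable n : nat.
Hypothesis k_half : k = n.+1.*2.

Lemma lower_half_step x y : x \in path_vset p n -> y \in BP -> e x y ->
  path_adj p k x y && ((y \in path_vset p n) || (y == p n.+1)).
Proof.
have k_gt1 : 1 < k by rewrite k_half doubleS.
case/path_vsetP => -[_ ->|j jn ->] yBP exy.
  rewrite (p0_neighbor k_gt1 exy yBP) path_adj_succ ?(ltnW k_gt1) //=.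
  by have [->|n_gt0] := posnP n; rewrite ?eqxx ?orbT ?mem_path_vset.
have jk : j.+1 < k by rewrite k_half; lia.
case: (inner_neighbor (ltn0Sn j) jk exy) => ->.
  by rewrite path_adj_pred ?(ltnW jk) // mem_path_vset // ltnW.
rewrite path_adj_succ //=; move: jn; rewrite leq_eqVlt => /orP[/eqP->|jn].
  by rewrite eqxx orbT.
by rewrite mem_path_vset.
Qed.

Lemma lower_half_path x t : x \in path_vset p n -> p n.+1 \notin belast x t ->
  path e x t -> all (fun v => v \in BP) t ->
  path (path_adj p k) x t && all (fun v => v \in P) t.
Proof.
have nk : n.+1 <= k by rewrite k_half; lia.
elim: t x => //= y t IH x xL; rewrite inE negb_or.
move=> /andP[_ midNt] /andP[exy et] /andP[yBP tBP].
case/andP: (lower_half_step xL yBP exy) => -> /orP[yL|/eqP ymid].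
  case/andP: (IH y yL midNt et tBP) => -> ->.
  by rewrite (subsetP (path_vset_leq p (ltnW nk))).
case: t midNt {IH et tBP} => [_|z t]; last by rewrite ymid /= inE eqxx.
by rewrite ymid mem_path_vset.
Qed.

Lemma walkb_before_mid t : walkb BP e (p 0) t -> p n.+1 \notin belast (p 0) t ->
  walkb P (path_adj p k) (p 0) t.
Proof.
case/and3P=> _ tBP et midNt; rewrite /walkb mem_path_vset //=.
have p0L : p 0 \in path_vset p n by rewrite mem_path_vset.
by case/andP: (lower_half_path p0L midNt et tBP) => -> ->.
Qed.

Lemma walkb_mirror_prefix t : walkb BP e (p 0) t -> ~~ walkb P (path_adj p k) (p 0) t ->
  walkb BP e (p k) (map_before (path_mirror p k) (p n.+1) t) &&
  ~~ walkb P (path_adj p k) (p k) (map_before (path_mirror p k) (p n.+1) t).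
Proof.
move=> tBP tNP; have nk : n.+1 <= k by rewrite k_half; lia.
have p0_mid : p 0 != p n.+1 by apply/eqP => /p_inj; move/(_ (leq0n k) nk).
have : p n.+1 \in t.
  apply: contraNT tNP => midNt; apply: (walkb_before_mid tBP).
  by apply: contra midNt => /mem_belast; rewrite inE eq_sym (negbTE p0_mid).
case/split_first => pre midNpre [rest t_eq]; subst t; rewrite map_before_cat //.
move: tBP tNP; rewrite !walkb_split => /andP[preBP restBP] tNP.
have preP : walkb P (path_adj p k) (p 0) (rcons pre (p n.+1)).
  by apply: (walkb_before_mid preBP); rewrite belast_rcons inE negb_or eq_sym p0_mid.
have mirror_mid : path_mirror p k (p n.+1) = p n.+1.
  by rewrite (path_mirror_p p_inj) //; congr p; rewrite k_half; lia.
have := walkb_path_mirror p_inj preP.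
rewrite map_rcons mirror_mid (path_mirror_p p_inj) // subn0 => mirrorP.
rewrite (walkb_sub (subsetUr _ _) path_adj_edge mirrorP) restBP /=.
by apply: contra tNP => /andP[_ ->]; rewrite preP.
Qed.

End TreePath.

Lemma subz_card (T : finType) (A B : {set T}) :
  B \subset A -> (#|A|%:Z - #|B|%:Z = #|A :\: B|%:Z)%R.
Proof. by move=> BA; rewrite cardsD (setIidPr BA) -subzn // subset_leq_card. Qed.

Theorem lemma1 (V : finType) (e : rel V) (p : nat -> V) (k : nat) :
  is_tree e ->
  1 <= k ->
  (forall i j, i <= k -> j <= k -> p i = p j -> i = j) ->
  (forall i, i < k -> e (p i) (p i.+1)) ->
  (forall i, 0 < i -> i < k -> #|[set y | e (p i) y]| = 2) ->
  ~~ odd k ->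
  forall l : nat, 1 <= l ->
  ((nwalks (compB e p k :|: path_vset p k) e l (p 0%N))%:Z
     - (nwalks (path_vset p k) (path_adj p k) l (p 0%N))%:Z
   <= (nwalks (compB e p k :|: path_vset p k) e l (p k))%:Z
     - (nwalks (path_vset p k) (path_adj p k) l (p k))%:Z)%R.
Proof.
move=> [e_sym [e_irr [_ e_acyclic]]] k_gt0 p_inj p_edge p_deg2 k_even l _.
have [n k_half] : exists n, k = n.+1.*2.
  have kE : k = k./2.*2 by rewrite -{1}(odd_double_half k) (negbTE k_even).
  have half_gt0 : 0 < k./2 by rewrite -double_gt0 -kE.
  by exists k./2.-1; rewrite prednK.
have walks_sub x : [set t : l.-tuple V | walkb (path_vset p k) (path_adj p k) x t]
    \subset [set t : l.-tuple V | walkb (compB e p k :|: path_vset p k) e x t].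
  apply/subsetP => t; rewrite !inE; apply: walkb_sub (subsetUr _ _) _.
  exact: path_adj_edge.
rewrite !nwalksE !subz_card ?walks_sub // lez_nat.
pose mirror_prefix (t : l.-tuple V) := insubd t (map_before (path_mirror p k) (p n.+1) t).
have mirror_prefixE t : val (mirror_prefix t) = map_before (path_mirror p k) (p n.+1) t.
  by rewrite val_insubd size_map_before size_tuple eqxx.
have mirror_prefixK : involutive mirror_prefix.
  move=> t; apply: val_inj; rewrite !mirror_prefixE map_beforeK //.
    exact: path_mirrorK.
  by move=> v; apply: path_mirror_eq_mid.
rewrite -(card_imset _ (inv_inj mirror_prefixK)).
apply/subset_leq_card/subsetP => _ /imsetP[t + ->].
rewrite !inE mirror_prefixE => /andP[tNP tBP]; rewrite andbC.
exact: walkb_mirror_prefix.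
Qed.
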